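(* Let $n\ge 1$ and let $\Gamma$ be the equioriented quiver $1\to 2\to\cdots\to n$ of type $A_n$. For $1\le i\le j\le n$ and $1\le k\le \ell\le n$, we have $M[i,j]\le M[k,\ell]$ if and only if there exists an oriented (connected) path from the vertex of $M[k,\ell]$ to the vertex of $M[i,j]$ in the Auslander--Reiten quiver of $\Gamma$. In particular, a $\Gamma$-representation $M$ is catenoid if and only if the set of its pairwise non-isomorphic indecomposable direct summands is totally ordered with respect to $\le$.
   Context: Representations are finite-dimensional over $\mathbb{C}$. For $1\le i\le j\le n$, $M[i,j]$ denotes the indecomposable $\Gamma$-representation with $\mathbb{C}$ at the vertices $i,\dots,j$, zero elsewhere, and identity maps along arrows between vertices in $[i,j]$; every indecomposable is isomorphic to exactly one $M[i,j]$. The partial order $\le$ is defined by $M[i,j]\le M[k,\ell]$ iff $i\le k$ and $j\le \ell$. The Auslander--Reiten quiver of $\Gamma$ has vertices the pairs $(i,j)$, $1\le i\le j\le n$ (the vertex $(i,j)$ corresponding to $M[i,j]$), and arrows $(i,j)\to(i-1,j)$ and $(i,j)\to(i,j-1)$ whenever the target is a valid pair. A representation $M$ is called catenoid if all its distinct (pairwise non-isomorphic) indecomposable direct summands lie on a single oriented connected path of the Auslander--Reiten quiver. *)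

From mathcomp Require Import all_boot.
Set Implicit Arguments. Unset Strict Implicit. Unset Printing Implicit Defensive.

(* Vertices of the AR quiver of the equioriented A_n quiver 1 -> 2 -> ... -> n:
   pairs (i,j) with 1 <= i <= j <= n; (i,j) stands for the indecomposable M[i,j]. *)
Definition valid_vert (n : nat) (p : nat * nat) : bool :=
  (1 <= p.1) && (p.1 <= p.2) && (p.2 <= n).

Definition Mle (p q : nat * nat) : bool := (p.1 <= q.1) && (p.2 <= q.2).

Definition ar_arrow (n : nat) (a b : nat * nat) : bool :=
  [&& valid_vert n a, valid_vert n b &
      (b == (a.1.-1, a.2)) && (1 < a.1) || (b == (a.1, a.2.-1)) && (1 < a.2)].

Definition ar_path_from_to (n : nat) (x y : nat * nat) : Prop :=
  exists s : seq (nat * nat), path (ar_arrow n) x s /\ last x s = y.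

(* A representation is described (Krull--Schmidt) by the list of its indecomposable
   direct summands, with multiplicity: M = (+)_{(i,j) in M} M[i,j]. *)
Definition rep_summands := seq (nat * nat).

Definition catenoid (n : nat) (M : rep_summands) : Prop :=
  exists (x : nat * nat) (s : seq (nat * nat)),
    path (ar_arrow n) x s /\ {subset M <= x :: s}.

Definition summands_totally_ordered (M : rep_summands) : Prop :=
  {in M &, forall p q, Mle p q || Mle q p}.

From mathcomp Require Import all_boot.
From mathcomp Require Import zify.
Set Implicit Arguments. Unset Strict Implicit.

(* Both arrows of the AR quiver decrease one coordinate by one, so an oriented
   path only moves down in the product order [Mle]; conversely, from (k,l) one
   reaches any valid (i,j) below it by first lowering k to i and then l to j,
   all intermediate pairs staying valid.  Hence the vertices on a path form a
   chain, and a chain of summands, sorted decreasingly, is threaded by gluing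
   such paths between consecutive elements. *)

Definition Mge (p q : nat * nat) : bool := Mle q p.

Lemma Mge_refl : reflexive Mge.
Proof. by move=> p; rewrite /Mge /Mle !leqnn. Qed.

Lemma Mge_trans : transitive Mge.
Proof. by move=> q p r; rewrite /Mge /Mle => /andP[? ?] /andP[? ?]; apply/andP; lia. Qed.

Lemma path_total_in (T : eqType) (r : rel T) (x : T) (s : seq T) :
  reflexive r -> transitive r -> path r x s ->
  {in x :: s &, total r}.
Proof.
move=> r_refl r_trans; elim: s x => [|y s IH] x.
  by move=> _ p q; rewrite !inE => /eqP-> /eqP->; rewrite r_refl.
move=> xys; have /allP x_min := order_path_min r_trans xys.
have {}IH := IH y (path_sorted xys).
move=> p q; rewrite in_cons => /predU1P[->|ps]; rewrite in_cons => /predU1P[->|qs].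
- by rewrite r_refl.
- by rewrite x_min.
- by rewrite x_min ?orbT.
- exact: IH.
Qed.

Lemma ar_arrow_Mge n x y : ar_arrow n x y -> Mge x y.
Proof.
by case/and3P=> _ _ /orP[] /andP[/eqP-> _]; rewrite /Mge /Mle /= leq_pred leqnn.
Qed.

Lemma ar_path_Mge n x s : path (ar_arrow n) x s -> path Mge x s.
Proof. exact/sub_path/ar_arrow_Mge. Qed.

Lemma ar_path_from_to_Mle n x y : ar_path_from_to n x y -> Mle y x.
Proof.
case=> s [xs <-]; have /allP := order_path_min Mge_trans (ar_path_Mge xs).
by case: s {xs} => [|z s] /= => [_|x_min]; [apply: Mge_refl | apply/x_min/mem_last].
Qed.

Lemma ar_path_refl n x : ar_path_from_to n x x.
Proof. by exists [::]. Qed.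

Lemma ar_path_trans n x y z :
  ar_path_from_to n x y -> ar_path_from_to n y z -> ar_path_from_to n x z.
Proof.
case=> s [xs <-] [t [yt <-]]; exists (s ++ t).
by rewrite cat_path last_cat xs yt.
Qed.

Lemma ar_path_arrow n x y : ar_arrow n x y -> ar_path_from_to n x y.
Proof. by move=> xy; exists [:: y]; rewrite /= xy. Qed.

Lemma ar_path_decr_fst n i k l :
  1 <= i <= k -> k <= l <= n -> ar_path_from_to n (k, l) (i, l).
Proof.
elim: k => [|k IH] /andP[i_ge1 i_le_k] /andP[k_le_l l_le_n]; first lia.
have [-> | i_ne_k] := eqVneq i k.+1; first exact: ar_path_refl.
apply: ar_path_trans (IH _ _); [|apply/andP; lia..].
apply: ar_path_arrow; rewrite /ar_arrow /valid_vert /= eqxx /=.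
by apply/and3P; split; lia.
Qed.

Lemma ar_path_decr_snd n i j l :
  1 <= i <= j -> j <= l <= n -> ar_path_from_to n (i, l) (i, j).
Proof.
elim: l => [|l IH] /andP[i_ge1 i_le_j] /andP[j_le_l l_le_n]; first lia.
have [-> | j_ne_l] := eqVneq j l.+1; first exact: ar_path_refl.
apply: ar_path_trans (IH _ _); [|apply/andP; lia..].
apply: ar_path_arrow; rewrite /ar_arrow /valid_vert /= eqxx orbC /=.
by apply/and3P; split; lia.
Qed.

Lemma Mle_ar_path n p q : valid_vert n p -> valid_vert n q ->
  Mle p q <-> ar_path_from_to n q p.
Proof.
case: p q => [i j] [k l]; rewrite /valid_vert /= => /andP[/andP[i_ge1 i_le_j] j_le_n].
move=> /andP[/andP[k_ge1 k_le_l] l_le_n]; split; last exact: ar_path_from_to_Mle.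
rewrite /Mle /= => /andP[i_le_k j_le_l].
apply: (@ar_path_trans _ _ (i, l)).
- by apply: ar_path_decr_fst; apply/andP; lia.
- by apply: ar_path_decr_snd; apply/andP; lia.
Qed.

Lemma Mge_chain_ar_path n x t : all (valid_vert n) (x :: t) -> path Mge x t ->
  exists s, path (ar_arrow n) x s /\ {subset x :: t <= x :: s}.
Proof.
elim: t x => [|y t IH] x /=; first by move=> _ _; exists [::]; split.
case/and3P=> vx vy vt /andP[xy yt].
have [|s [ys t_s]] := IH y _ yt; first by rewrite /= vy.
have [seg [x_seg seg_y]] := (Mle_ar_path vy vx).1 xy.
exists (seg ++ s); split; first by rewrite cat_path x_seg seg_y ys.
have y_seg : y \in x :: seg by rewrite -seg_y mem_last.
move=> q; rewrite in_cons => /predU1P[-> | /t_s]; first exact: mem_head.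
rewrite -cat_cons mem_cat in_cons => /predU1P[-> | ->]; last by rewrite orbT.
by rewrite y_seg.
Qed.

Theorem lemma1p2 (n : nat) (hn : 1 <= n) :
  (forall i j k l : nat,
      1 <= i <= j -> j <= n -> 1 <= k <= l -> l <= n ->
      (Mle (i, j) (k, l) <-> ar_path_from_to n (k, l) (i, j)))
  /\
  (forall M : rep_summands, all (valid_vert n) M ->
      (catenoid n M <-> summands_totally_ordered M)).
Proof.
split=> [i j k l ij j_le_n kl l_le_n | M M_valid].
  by apply: Mle_ar_path; rewrite /valid_vert /= ?ij ?kl.
split=> [[x [s [xs M_xs]]] p q /M_xs p_xs /M_xs q_xs | M_total].
  by have := path_total_in Mge_refl Mge_trans (ar_path_Mge xs) q_xs p_xs.
have Mge_total : {in M &, total Mge} by move=> p q Mp Mq; rewrite orbC M_total.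
have := sort_sorted_in Mge_total (allss M).
have M_sort : sort Mge M =i M by apply: mem_sort.
case: (sort Mge M) M_sort => [|x t] M_sort sorted_xt.
  by exists (1, 1), [::]; split=> // q; rewrite -M_sort.
have [|s [xs xt_s]] := @Mge_chain_ar_path n x t _ sorted_xt.
  by apply/allP=> q; rewrite M_sort => /(allP M_valid).
by exists x, s; split=> // q; rewrite -M_sort => /xt_s.
Qed.
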